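(* Let $T$ be a complete theory and $\phi,\psi$ formulas with $T\vdash\phi\,\mathtt U\,\psi$. Then $T\vdash\phi\,\mathtt u\,\psi$, or there exists $m\in\omega$ such that $T\vdash\bigwedge_{i=0}^m[\omega]^i\mathtt g(\phi\wedge\neg\psi)\wedge[\omega]^{m+1}(\phi\,\mathtt u\,\psi)$.
   Context: Fix $Var=\{p_n : n\in\omega\}$. The formulas of $L([1],[\omega],\mathtt u,\mathtt U)$ form the smallest set containing $Var$ and closed under $\neg\phi$, $[1]\phi$, $[\omega]\phi$, $(\phi\wedge\psi)$, $(\phi\,\mathtt u\,\psi)$, $(\phi\,\mathtt U\,\psi)$. Abbreviations: $\vee,\to,\leftrightarrow$ as usual; $\mathtt f\phi:=(\phi\to\phi)\,\mathtt u\,\phi$, $\mathtt g\phi:=\neg\mathtt f\neg\phi$; $[a]^0\phi:=\phi$, $[a]^{n+1}\phi:=[a][a]^n\phi$ for $a\in\{1,\omega\}$. A theory is a nonempty set of formulas. Proof system. Axioms: all instances of A1 substitution instances of classical tautologies; A2 $[1][\omega]\phi\leftrightarrow[\omega]\phi$; A3 $\neg[a]\phi\leftrightarrow[a]\neg\phi$ ($a\in\{1,\omega\}$); A4 $[a](\phi*\psi)\leftrightarrow([a]\phi*[a]\psi)$ ($a\in\{1,\omega\}$, $*\in\{\wedge,\vee,\to,\leftrightarrow\}$); A5 $\psi\to\phi\,\mathtt u\,\psi$; A6 $\phi\,\mathtt u\,\psi\to\phi\,\mathtt U\,\psi$; A7 $\big(\bigwedge_{k=0}^n[1]^k(\phi\wedge\neg\psi)\wedge[1]^{n+1}\psi\big)\to\phi\,\mathtt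 u\,\psi$ ($n\in\omega$); A8 $\big(\bigwedge_{k=0}^n[\omega]^k\mathtt g(\phi\wedge\neg\psi)\wedge[\omega]^{n+1}(\phi\,\mathtt u\,\psi)\big)\to\phi\,\mathtt U\,\psi$ ($n\in\omega$). Rules: R1 from $\phi$ and $\phi\to\psi$ infer $\psi$; R2 from $\phi$ infer $[a]\phi$, $a\in\{1,\omega\}$; R3 from $\theta\to\neg\psi$ and all $\theta\to\big(\bigvee_{k=0}^n[1]^k(\neg\phi\vee\psi)\vee[1]^{n+1}\neg\psi\big)$, $n\in\omega$, infer $\theta\to\neg(\phi\,\mathtt u\,\psi)$; R4 from $\theta\to\neg(\phi\,\mathtt u\,\psi)$ and all $\theta\to\big(\bigvee_{k=0}^n[\omega]^k\neg\mathtt g(\phi\wedge\neg\psi)\vee[\omega]^{n+1}\neg(\phi\,\mathtt u\,\psi)\big)$, $n\in\omega$, infer $\theta\to\neg(\phi\,\mathtt U\,\psi)$. $\vdash\phi$ ($\phi$ is a theorem) iff there is a sequence $(\phi_\beta)_{\beta\le\alpha}$, $\alpha$ a countable ordinal, with $\phi_\alpha=\phi$ and each $\phi_\beta$ an axiom or obtained from earlier members by a rule. $T\vdash\phi$ iff there is such a sequence in which each member is an axiom, a member of $T$, or obtained from earlier members by a rule, where R2 may only be applied to theorems. A theory $T$ is consistent iff there is no formula $\chi$ with $T\vdash\chi$ and $T\vdash\neg\chi$; $T$ is complete iff it is consistent and for every formula $\chi$, $T\vdash\chi$ or $T\vdash\neg\chi$. *)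

From Stdlib Require Import Arith.

Inductive form : Type :=
| Var   : nat -> form
| Neg   : form -> form
| Box1  : form -> form
| BoxW  : form -> form
| And   : form -> form -> form
| Until  : form -> form -> form   (* phi u psi *)
| UntilW : form -> form -> form.  (* phi U psi *)

Definition Or  (a b : form) : form := Neg (And (Neg a) (Neg b)).
Definition Imp (a b : form) : form := Or (Neg a) b.
Definition Iff (a b : form) : form := And (Imp a b) (Imp b a).
Definition Fut (a : form) : form := Until (Imp a a) a.
Definition Glob (a : form) : form := Neg (Fut (Neg a)).

Inductive modality := M1 | MW.
Definition box (a : modality) (p : form) : form :=
  match a with M1 => Box1 p | MW => BoxW p end.
Fixpoint boxn (a : modality) (n : nat) (p : form) : form :=
  match n with 0 => p | S n => box a (boxn a n p) end.

Fixpoint bigAnd (F : nat -> form) (n : nat) : form :=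
  match n with 0 => F 0 | S n' => And (bigAnd F n') (F (S n')) end.
Fixpoint bigOr (F : nat -> form) (n : nat) : form :=
  match n with 0 => F 0 | S n' => Or (bigOr F n') (F (S n')) end.

Inductive pform : Type :=
| PVar : nat -> pform
| PNeg : pform -> pform
| PAnd : pform -> pform -> pform.
Fixpoint peval (v : nat -> bool) (P : pform) : bool :=
  match P with
  | PVar n => v n
  | PNeg P => negb (peval v P)
  | PAnd P Q => andb (peval v P) (peval v Q)
  end.
Definition tautology (P : pform) : Prop := forall v, peval v P = true.
Fixpoint psubst (s : nat -> form) (P : pform) : form :=
  match P with
  | PVar n => s n
  | PNeg P => Neg (psubst s P)
  | PAnd P Q => And (psubst s P) (psubst s Q)
  end.

Inductive binop := BAnd | BOr | BImp | BIff.
Definition binop_app (o : binop) (a b : form) : form :=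
  match o with BAnd => And a b | BOr => Or a b | BImp => Imp a b | BIff => Iff a b end.

Inductive IsAxiom : form -> Prop :=
| A1 : forall P s, tautology P -> IsAxiom (psubst s P)
| A2 : forall p, IsAxiom (Iff (Box1 (BoxW p)) (BoxW p))
| A3 : forall a p, IsAxiom (Iff (Neg (box a p)) (box a (Neg p)))
| A4 : forall a o p q,
    IsAxiom (Iff (box a (binop_app o p q)) (binop_app o (box a p) (box a q)))
| A5 : forall p q, IsAxiom (Imp q (Until p q))
| A6 : forall p q, IsAxiom (Imp (Until p q) (UntilW p q))
| A7 : forall p q n,
    IsAxiom (Imp (And (bigAnd (fun k => boxn M1 k (And p (Neg q))) n)
                    (boxn M1 (S n) q))
               (Until p q))
| A8 : forall p q n,
    IsAxiom (Imp (And (bigAnd (fun k => boxn MW k (Glob (And p (Neg q)))) n)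
                    (boxn MW (S n) (Until p q)))
               (UntilW p q)).

Definition R3prem (th p q : form) (n : nat) : form :=
  Imp th (Or (bigOr (fun k => boxn M1 k (Or (Neg p) q)) n)
             (boxn M1 (S n) (Neg q))).
Definition R4prem (th p q : form) (n : nat) : form :=
  Imp th (Or (bigOr (fun k => boxn MW k (Neg (Glob (And p (Neg q))))) n)
             (boxn MW (S n) (Neg (Until p q)))).

Inductive Thm : form -> Prop :=
| t_ax  : forall p, IsAxiom p -> Thm p
| t_mp  : forall p q, Thm p -> Thm (Imp p q) -> Thm q
| t_nec : forall a p, Thm p -> Thm (box a p)
| t_R3  : forall th p q, Thm (Imp th (Neg q)) ->
    (forall n, Thm (R3prem th p q n)) -> Thm (Imp th (Neg (Until p q)))
| t_R4  : forall th p q, Thm (Imp th (Neg (Until p q))) ->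
    (forall n, Thm (R4prem th p q n)) -> Thm (Imp th (Neg (UntilW p q))).

(* T |- phi : R2 only applied to theorems *)
Inductive Prv (T : form -> Prop) : form -> Prop :=
| p_ax  : forall p, IsAxiom p -> Prv T p
| p_hyp : forall p, T p -> Prv T p
| p_mp  : forall p q, Prv T p -> Prv T (Imp p q) -> Prv T q
| p_nec : forall a p, Thm p -> Prv T (box a p)
| p_R3  : forall th p q, Prv T (Imp th (Neg q)) ->
    (forall n, Prv T (R3prem th p q n)) -> Prv T (Imp th (Neg (Until p q)))
| p_R4  : forall th p q, Prv T (Imp th (Neg (Until p q))) ->
    (forall n, Prv T (R4prem th p q n)) -> Prv T (Imp th (Neg (UntilW p q))).

Definition theory (T : form -> Prop) : Prop := exists p, T p.
Definition consistent (T : form -> Prop) : Prop :=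
  ~ exists c, Prv T c /\ Prv T (Neg c).
Definition complete (T : form -> Prop) : Prop :=
  consistent T /\ forall c, Prv T c \/ Prv T (Neg c).

(* Suppose T is complete and neither disjunct is provable.  By
   completeness T proves [~ (phi u psi)] and, for every m, the negation of the
   m-th A8 antecedent [/\_{i<=m} [w]^i g(phi /\ ~psi) /\ [w]^(m+1) (phi u psi)].
   Pushing these negations inside the conjunctions and boxes turns them, for
   the trivially true guard [p0 -> p0], into exactly the premises of the
   infinitary rule R4, which therefore yields [~ (phi U psi)] in T —
   contradicting consistency, since T proves [phi U psi]. *)

From Stdlib Require Import Classical.

(* Propositional connectives on tautology skeletons, mirroring [Imp], [Or], [Iff]. *)
Definition pimp (x y : pform) : pform := PNeg (PAnd (PNeg (PNeg x)) (PNeg y)).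
Definition por (x y : pform) : pform := PNeg (PAnd (PNeg x) (PNeg y)).
Definition piff (x y : pform) : pform := PAnd (pimp x y) (pimp y x).

Definition subst4 (a b c d : form) (n : nat) : form :=
  match n with 0 => a | 1 => b | 2 => c | _ => d end.

Ltac truth_table :=
  let v := fresh "v" in
  intro v; unfold pimp, por, piff; simpl;
  destruct (v 0), (v 1), (v 2), (v 3); reflexivity.

Lemma thm_taut (P : pform) (s : nat -> form) : tautology P -> Thm (psubst s P).
Proof. intro HP; apply t_ax, A1, HP. Qed.

Lemma thm_mp2 (p q r : form) : Thm p -> Thm q -> Thm (Imp p (Imp q r)) -> Thm r.
Proof. intros Hp Hq Hpqr; exact (t_mp _ _ Hq (t_mp _ _ Hp Hpqr)). Qed.

Lemma thm_iff_elim (p q : form) : Thm (Imp (Iff p q) (Imp p q)).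
Proof.
  exact (thm_taut (pimp (piff (PVar 0) (PVar 1)) (pimp (PVar 0) (PVar 1)))
           (subst4 p q p p) ltac:(truth_table)).
Qed.

Lemma thm_iff_imp_trans (p q r : form) :
  Thm (Imp (Iff p q) (Imp (Imp q r) (Imp p r))).
Proof.
  exact (thm_taut (pimp (piff (PVar 0) (PVar 1))
                        (pimp (pimp (PVar 1) (PVar 2)) (pimp (PVar 0) (PVar 2))))
           (subst4 p q r r) ltac:(truth_table)).
Qed.

Lemma thm_weaken (a b : form) : Thm (Imp b (Imp a b)).
Proof.
  exact (thm_taut (pimp (PVar 1) (pimp (PVar 0) (PVar 1)))
           (subst4 a b a a) ltac:(truth_table)).
Qed.

Lemma thm_imp_refl (p : form) : Thm (Imp p p).
Proof.
  exact (thm_taut (pimp (PVar 0) (PVar 0)) (subst4 p p p p) ltac:(truth_table)).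
Qed.

Lemma thm_neg_and_or (a b c d : form) :
  Thm (Imp (Imp (Neg a) b) (Imp (Imp (Neg c) d) (Imp (Neg (And a c)) (Or b d)))).
Proof.
  exact (thm_taut (pimp (pimp (PNeg (PVar 0)) (PVar 1))
                   (pimp (pimp (PNeg (PVar 2)) (PVar 3))
                         (pimp (PNeg (PAnd (PVar 0) (PVar 2))) (por (PVar 1) (PVar 3)))))
           (subst4 a b c d) ltac:(truth_table)).
Qed.

Lemma thm_box_neg_mono (a : modality) (Y Z : form) :
  Thm (Imp (Neg Y) Z) -> Thm (Imp (Neg (box a Y)) (box a Z)).
Proof.
  intro HYZ.
  assert (Hdist : Thm (Imp (box a (Neg Y)) (box a Z))).
  { apply (t_mp _ _ (t_nec a _ HYZ)).
    refine (t_mp _ _ _ (thm_iff_elim _ _)).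
    apply t_ax; exact (A4 a BImp (Neg Y) Z). }
  assert (Hneg : Thm (Iff (Neg (box a Y)) (box a (Neg Y)))) by apply t_ax, A3.
  exact (thm_mp2 _ _ _ Hneg Hdist (thm_iff_imp_trans _ _ _)).
Qed.

Lemma thm_neg_boxn (a : modality) (k : nat) (X : form) :
  Thm (Imp (Neg (boxn a k X)) (boxn a k (Neg X))).
Proof.
  induction k as [|k IH]; simpl.
  - apply thm_imp_refl.
  - now apply thm_box_neg_mono.
Qed.

Lemma thm_neg_bigAnd (F F' : nat -> form) :
  (forall k, Thm (Imp (Neg (F k)) (F' k))) ->
  forall n, Thm (Imp (Neg (bigAnd F n)) (bigOr F' n)).
Proof.
  intros HF n; induction n as [|n IH]; simpl.
  - apply HF.
  - exact (thm_mp2 _ _ _ IH (HF (S n)) (thm_neg_and_or _ _ _ _)).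
Qed.

Lemma prv_thm (T : form -> Prop) (p : form) : Thm p -> Prv T p.
Proof.
  induction 1.
  - now apply p_ax.
  - exact (p_mp _ _ _ IHThm1 IHThm2).
  - now apply p_nec.
  - now apply p_R3.
  - now apply p_R4.
Qed.

Lemma prv_guard (T : form -> Prop) (th p : form) : Prv T p -> Prv T (Imp th p).
Proof. intro Hp; exact (p_mp _ _ _ Hp (prv_thm _ _ (thm_weaken _ _))). Qed.

Definition unfoldingA8 (phi psi : form) (m : nat) : form :=
  And (bigAnd (fun i => boxn MW i (Glob (And phi (Neg psi)))) m)
      (boxn MW (S m) (Until phi psi)).

Lemma prv_R4prem (T : form -> Prop) (th phi psi : form) (n : nat) :
  Prv T (Neg (unfoldingA8 phi psi n)) -> Prv T (R4prem th phi psi n).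
Proof.
  intro Hn; apply prv_guard.
  apply (p_mp _ _ _ Hn), prv_thm.
  exact (thm_mp2 _ _ _
           (thm_neg_bigAnd _ _ (fun k => thm_neg_boxn MW k _) n)
           (thm_neg_boxn MW (S n) (Until phi psi))
           (thm_neg_and_or _ _ _ _)).
Qed.

Lemma prv_neg_UntilW (T : form -> Prop) (phi psi : form) :
  Prv T (Neg (Until phi psi)) ->
  (forall m, Prv T (Neg (unfoldingA8 phi psi m))) ->
  Prv T (Neg (UntilW phi psi)).
Proof.
  intros Hu Hunf.
  set (top := Imp (Var 0) (Var 0)).
  assert (Hguarded : Prv T (Imp top (Neg (UntilW phi psi)))).
  { apply p_R4; [now apply prv_guard | intro n; now apply prv_R4prem]. }
  exact (p_mp _ _ _ (prv_thm _ _ (thm_imp_refl _)) Hguarded).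
Qed.

Theorem mainTheorem8 (T : form -> Prop) (phi psi : form) :
  theory T -> complete T -> Prv T (UntilW phi psi) ->
  Prv T (Until phi psi) \/
  exists m : nat,
    Prv T (And (bigAnd (fun i => boxn MW i (Glob (And phi (Neg psi)))) m)
               (boxn MW (S m) (Until phi psi))).
Proof.
  intros _ [Hcons Hcomp] HU.
  destruct (Hcomp (Until phi psi)) as [Hu | Hnu]; [now left | right].
  apply NNPP; intro Hnone.
  assert (Hunf : forall m, Prv T (Neg (unfoldingA8 phi psi m))).
  { intro m; destruct (Hcomp (unfoldingA8 phi psi m)) as [Hm | Hm]; [|exact Hm].
    exfalso; apply Hnone; now exists m. }
  apply Hcons; exists (UntilW phi psi).
  split; [exact HU | now apply prv_neg_UntilW].
Qed.
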